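(* For all $b,b'\in\mathbb F_{3^{2m}}$, the vector $(\mathrm{Tr}_{2m}(bt)\,\mathrm{Tr}_{2m}(b't))_{t\in\mathbb F_{3^{2m}}}$ belongs to $\mathcal C_3(\mathbb D_d)$.
   Context: Let $m\ge 2$ be an integer. For $s\in\{m,2m\}$ let $\mathrm{Tr}_s:\mathbb F_{3^s}\to\mathbb F_3$ denote the absolute trace. Vectors in $\mathbb F_3^{3^{2m}}$ are indexed by $\mathbb F_{3^{2m}}$, and a function $f:\mathbb F_{3^{2m}}\to\mathbb F_3$ is identified with $(f(t))_{t\in\mathbb F_{3^{2m}}}$. Let $\mathcal C(2m,3)=\{(\mathrm{Tr}_{2m}(at^{3^m+1}+bt)+h)_{t\in\mathbb F_{3^{2m}}}: a\in\mathbb F_{3^m}, b\in\mathbb F_{3^{2m}}, h\in\mathbb F_3\}$, let $d$ be its minimum nonzero Hamming weight, let $\mathbb D_d$ be the incidence structure on $\mathbb F_{3^{2m}}$ whose blocks are the supports of the weight-$d$ codewords, and let $\mathcal C_3(\mathbb D_d)$ be the $\mathbb F_3$-span of the incidence vectors of the blocks (entry $1$ on the block, $0$ elsewhere). *)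

From HB Require Import structures.
From mathcomp Require Import all_boot all_order all_algebra all_field.
Set Implicit Arguments. Unset Strict Implicit. Unset Printing Implicit Defensive.
Import GRing.Theory.
Local Open Scope ring_scope.

Section Defs.
Variables (F : finFieldType) (m : nat).

Definition Tr2m (x : F) : F := \sum_(i < (2 * m)%N) x ^+ (3 ^ i).

Definition trF3 (x : F) : 'F_3 :=
  odflt 0 [pick k : 'F_3 | ((k : nat)%:R : F) == Tr2m x].

Definition subF : {set F} := [set a : F | a ^+ (3 ^ m) == a].

Local Notation vec := {ffun F -> 'F_3}.

Definition codeC : {set vec} :=
  [set c : vec | [exists a : F, exists b : F, exists h : 'F_3,
     (a \in subF) &&
     (c == [ffun t => trF3 (a * t ^+ (3 ^ m + 1) + b * t) + h])]].

Definition supp (c : vec) : {set F} := [set t | c t != 0].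
Definition wt (c : vec) : nat := #|supp c|.

Definition min_wt_codeword (c : vec) : bool :=
  [&& c \in codeC, c != 0 &
      [forall c' in codeC, (c' != 0) ==> (wt c <= wt c')%N]].

Definition is_block (B : {set F}) : bool :=
  [exists c : vec, min_wt_codeword c && (supp c == B)].

Definition incvec (B : {set F}) : vec := [ffun t => if t \in B then 1 else 0].

Definition in_code_of_design (v : vec) : Prop :=
  exists lam : {ffun {set F} -> 'F_3},
    forall t : F, v t = \sum_(B : {set F} | is_block B) lam B * incvec B t.

End Defs.

From HB Require Import structures.
From mathcomp Require Import all_boot all_order all_algebra all_field.
From mathcomp Require Import ring zify.
Import GRing.Theory.
Local Open Scope ring_scope.

(* Write q = 3^m, tr = Tr_{2m} read in F_3, and c_{a,b,h}(t) = tr(a t^(q+1) + b t) + h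
   (a in F_q) for the codewords of C(2m,3).
   1. tr is F_3-linear, invariant under Frobenius and onto F_3 on every line u*F.
   2. The substitution t := mu t + r (mu <> 0) sends c_{a,b,h} to another codeword of
      the same weight, hence preserves minimum-weight codewords.
   3. For a minimum-weight codeword c, t |-> c(t)^2 is the incidence vector of its
      support (x^2 = 1 for nonzero x in F_3), so it lies in C_3(D_d).
   4. Some minimum-weight codeword has a <> 0: nonzero codewords with a = 0 have at most
      |F|/3 zeros, while a parity count shows that some level set of tr(t^(q+1)) has
      more than |F|/3 elements.
   5. For a <> 0 there is s <> 0 with tr(a s^(q+1)) = 0; then c(x + s) and c(x - s) are
      c(x) plus/minus a nonconstant affine function l(x), and the F_3 identity
      x^2 + (x+l)^2 + (x-l)^2 = -l^2 puts every tr(e t)^2 into C_3(D_d).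
   6. Polarization xy = (x+y)^2 - (x-y)^2 in F_3 concludes. *)

Local Notation vec F := {ffun F -> 'F_3}.

Lemma F3_collision {T : finType} {A : {set T}} (f : T -> 'F_3) : (3 < #|A|)%N ->
  exists x y, [/\ x \in A, y \in A, x != y & f x = f y].
Proof.
move=> A_big; have noninj : ~ {in A &, injective f}.
  move/imset_injP/eqP => card_img; move: (max_card (f @: A)).
  by rewrite card_img card_Fp //; lia.
case: (pickP [pred xy : T * T | [&& xy.1 \in A, xy.2 \in A, xy.1 != xy.2
  & f xy.1 == f xy.2]]) => [[x y] /and4P [xA yA xy /eqP fxy] | none].
  by exists x, y.
case: noninj => x y xA yA fxy; apply/eqP/negPn/negP => xy.
by have := none (x, y); rewrite /= xA yA xy fxy eqxx.
Qed.

Lemma card_fibers {T S : finType} (g : T -> S) :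
  (\sum_(v : S) #|[set t | g t == v]|)%N = #|T|.
Proof.
rewrite -sum1_card (partition_big g predT) //=; apply: eq_bigr => v _.
by rewrite sum1dep_card; apply: eq_card => t; rewrite !inE.
Qed.

Lemma below_average_eq {I : finType} (f : I -> nat) (K : nat) :
  (\sum_i f i)%N = K -> (forall i, #|I| * f i <= K)%N -> forall i, (#|I| * f i)%N = K.
Proof.
move=> sumK le_avg w; apply/eqP; rewrite eqn_leq le_avg /=.
have others : (\sum_(i | i != w) #|I| * f i <= #|I|.-1 * K)%N.
  apply: (@leq_trans (\sum_(i | i != w) K)); first by apply: leq_sum => i _.
  by rewrite sum_nat_const -(cardC1 w).
have : (#|I| * K = #|I| * f w + \sum_(i | i != w) #|I| * f i)%N.
  by rewrite -sumK big_distrr /= (bigD1 w).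
have : (0 < #|I|)%N by apply/card_gt0P; exists w.
by case: #|I| others => [|n] //= others _; rewrite mulSn; lia.
Qed.

Lemma sqr_F3 (x : 'F_3) : x ^+ 2 = (x != 0)%:R.
Proof. by case: x => [[|[|[|?]]] ?]; apply: val_inj. Qed.

Lemma natr3_F3 : 3%:R = 0 :> 'F_3.
Proof. exact: val_inj. Qed.

Lemma sqr_shifts_F3 (x d : 'F_3) : x ^+ 2 + (x + d) ^+ 2 + (x - d) ^+ 2 = - d ^+ 2.
Proof.
have -> : x ^+ 2 + (x + d) ^+ 2 + (x - d) ^+ 2 = 3%:R * (x ^+ 2 + d ^+ 2) - d ^+ 2.
  by ring.
by rewrite natr3_F3 mul0r add0r.
Qed.

Lemma polarization_F3 (x y : 'F_3) : x * y = (x + y) ^+ 2 + (-1) * (x - y) ^+ 2.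
Proof.
have -> : (x + y) ^+ 2 + (-1) * (x - y) ^+ 2 = 3%:R * (x * y) + x * y by ring.
by rewrite natr3_F3 mul0r add0r.
Qed.

Section TraceCode.
Variables (F : finFieldType) (m : nat).
Hypothesis hF : #|F| = (3 ^ (2 * m))%N.

Local Notation q := (3 ^ m)%N.
Local Notation Tr := (@Tr2m F m).
Local Notation tr := (@trF3 F m).

Lemma char3 : (3%N \in [pchar F])%R.
Proof. by apply: (card_finPcharP hF). Qed.

Lemma natr3 : (3%:R : F) = 0.
Proof. exact: pcharf0 char3. Qed.

Lemma natr2_neq0 : (2%:R : F) != 0.
Proof. by rewrite -(GRing.dvdn_pcharf char3). Qed.

Lemma frobD k (x y : F) : (x + y) ^+ (3 ^ k) = x ^+ (3 ^ k) + y ^+ (3 ^ k).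
Proof. by apply: exprDn_pchar; rewrite pnatX pnatE // char3. Qed.

Lemma frobN k (x : F) : (- x) ^+ (3 ^ k) = - x ^+ (3 ^ k).
Proof. by apply: exprNn_pchar; rewrite pnatX pnatE // char3. Qed.

Lemma frob_sum k n (f : 'I_n -> F) :
  (\sum_(i < n) f i) ^+ (3 ^ k) = \sum_(i < n) f i ^+ (3 ^ k).
Proof.
elim: n f => [|n IH] f; first by rewrite !big_ord0 expr0n expn_eq0.
by rewrite !big_ord_recr /= frobD IH.
Qed.

Lemma cardF_sq : #|F| = (q * q)%N.
Proof. by rewrite hF -expnD addnn -mul2n. Qed.

Lemma frobqK (x : F) : (x ^+ q) ^+ q = x.
Proof. by rewrite -exprM -cardF_sq expf_card. Qed.

Lemma TrD x y : Tr (x + y) = Tr x + Tr y.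
Proof. by rewrite /Tr2m -big_split; apply: eq_bigr => i _; rewrite frobD. Qed.

(* Tr x is fixed by cubing, because the Frobenius permutes its terms cyclically. *)
Lemma Tr_frob x : Tr (x ^+ 3) = Tr x.
Proof.
rewrite /Tr2m; case: (2 * m)%N hF => [|n] hFn; first by rewrite !big_ord0.
under eq_bigr => i _ do rewrite -exprM -expnS.
rewrite big_ord_recr big_ord_recl /= -hFn expf_card addrC.
by congr (_ + _); apply: eq_bigr => i _; rewrite expnS.
Qed.

Lemma Tr_cube x : Tr x ^+ 3 = Tr x.
Proof.
rewrite -[3%N]/(3 ^ 1)%N /Tr2m frob_sum -[RHS]Tr_frob.
by apply: eq_bigr => i _; rewrite exprAC.
Qed.

Lemma cube_fixed {y : F} : y ^+ 3 = y -> [\/ y = 0, y = 1 | y = 2%:R].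
Proof.
move=> e; have : y * (y - 1) * (y - 2%:R) = 0.
  have -> : y * (y - 1) * (y - 2%:R) = (y ^+ 3 - y) - 3%:R * (y ^+ 2 - y) by ring.
  by rewrite e natr3 subrr mul0r subr0.
move/eqP; rewrite !mulf_eq0 !subr_eq0 => /orP[/orP[]|] /eqP.
- exact: Or31.
- exact: Or32.
- exact: Or33.
Qed.

Definition F3toF (k : 'F_3) : F := (k : nat)%:R.

Lemma F3toF_D k1 k2 : F3toF (k1 + k2) = F3toF k1 + F3toF k2.
Proof. by rewrite /F3toF -natrD -(GRing.natr_mod_pchar char3 (k1 + k2)%N). Qed.

Lemma F3toF_inj : injective F3toF.
Proof.
have small (k : 'F_3) : (k < 3)%N by case: k.
move=> k1 k2; wlog le12 : k1 k2 / (k1 <= k2)%N => [hwlog e|e].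
  by case: (leqP k1 k2) => [|/ltnW] h; [apply: hwlog | apply/esym/hwlog].
have : (3 %| k2 - k1)%N.
  by rewrite (GRing.dvdn_pcharf char3) natrB // -[k2%:R]/(F3toF k2) -e subrr.
move: (small k1) (small k2) => s1 s2 /dvdnP [k hk]; apply: val_inj => /=; lia.
Qed.

Lemma trF3E x : F3toF (tr x) = Tr x.
Proof.
rewrite /trF3; case: pickP => [k /eqP //|none].
pose two : 'F_3 := 1 + 1.
have two2 : (two : nat) = 2%N by [].
by case: (cube_fixed (Tr_cube x)) => e; [move: (none 0) | move: (none 1)
  | move: (none two); rewrite two2]; rewrite e eqxx.
Qed.

Lemma trD x y : tr (x + y) = tr x + tr y.
Proof. by apply: F3toF_inj; rewrite F3toF_D !trF3E TrD. Qed.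

Lemma tr0 : tr 0 = 0.
Proof. by apply/(addrI (tr 0)); rewrite -trD !addr0. Qed.

Lemma trN x : tr (- x) = - tr x.
Proof. by apply/(addrI (tr x)); rewrite -trD !subrr tr0. Qed.

Lemma trB x y : tr (x - y) = tr x - tr y.
Proof. by rewrite trD trN. Qed.

Lemma trMn x n : tr (x *+ n) = tr x *+ n.
Proof. by elim: n => [|n IH]; rewrite ?mulr0n ?tr0 // !mulrS trD IH. Qed.

Lemma trZ k x : tr (F3toF k * x) = k * tr x.
Proof. by rewrite /F3toF mulr_natl trMn -mulr_natl natr_Zp. Qed.

Lemma tr_frob k x : tr (x ^+ (3 ^ k)) = tr x.
Proof.
apply: F3toF_inj; rewrite !trF3E; elim: k => [|k IH]; first by rewrite expr1.
by rewrite expnSr exprM Tr_frob.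
Qed.

Hypothesis hm : (2 <= m)%N.

(* Tr is a nonzero map: it is evaluation of the polynomial sum_i X^(3^i), which is
   nonzero and of degree 3^(2m-1) < |F|, so it cannot vanish on all of F. *)
Lemma Tr_neq0 : exists t, Tr t != 0.
Proof.
have [n hn] : exists n, (2 * m)%N = n.+1 by exists (2 * m).-1; lia.
pose P : {poly F} := \sum_(i < n.+1) 'X^(3 ^ i).
have PE t : P.[t] = Tr t.
  by rewrite /Tr2m hn /P horner_sum; apply: eq_bigr => i _; rewrite hornerXn.
have P1 : P`_1 = 1.
  rewrite /P coef_sum (bigD1 ord0) //= coefXn expn0 eqxx big1 ?addr0 // => i i0.
  rewrite coefXn; case: eqP => // e1; move: e1 i0.
  by case: i => [[|j] hj] //= + _; rewrite expnS; lia.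
have P_neq0 : P != 0 by apply: contra_neq (@oner_neq0 F) => P0; rewrite -P1 P0 coef0.
have P_small : (size P <= (3 ^ n).+1)%N.
  apply: leq_trans (size_sum _ _ _) _; apply/bigmax_leqP => i _.
  by rewrite size_polyXn ltnS leq_exp2l // -ltnS.
apply/existsP; apply: contraT => /existsPn noroot.
have roots : all (root P) (enum F).
  by apply/allP => t _; rewrite /root PE; apply: negbNE (noroot t).
have := max_poly_roots P_neq0 roots (enum_uniq F).
rewrite -cardE hF hn expnS => /leq_trans/(_ P_small).
have : (0 < 3 ^ n)%N by rewrite expn_gt0.
by generalize (3 ^ n)%N => x; lia.
Qed.

Lemma tr_onto {u : F} (v : 'F_3) : u != 0 -> exists r, tr (u * r) = v.
Proof.
move=> u0; have [t1 Tt1] := Tr_neq0.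
have t1_neq0 : tr t1 != 0 by apply: contra_neq Tt1; rewrite -trF3E => ->.
exists (F3toF (v / tr t1) * t1 / u).
by rewrite mulrC divfK // trZ divfK.
Qed.

Definition codeword (a b : F) (h : 'F_3) : vec F :=
  [ffun t => tr (a * t ^+ (q + 1) + b * t) + h].

Lemma codeword_in a b h : a ^+ q = a -> codeword a b h \in codeC F m.
Proof.
move=> ha; rewrite inE; apply/existsP; exists a; apply/existsP; exists b.
by apply/existsP; exists h; rewrite inE ha !eqxx.
Qed.

Lemma codeCP {c : vec F} :
  c \in codeC F m -> exists a b h, a ^+ q = a /\ c = codeword a b h.
Proof.
rewrite inE => /existsP [a /existsP [b /existsP [h /andP [ha /eqP ->]]]].
by exists a, b, h; move: ha; rewrite inE => /eqP.
Qed.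

Lemma norm_frob (x : F) : (x ^+ (q + 1)) ^+ q = x ^+ (q + 1).
Proof. by rewrite exprD expr1 exprMn frobqK mulrC. Qed.

Lemma normN (x : F) : (- x) ^+ (q + 1) = x ^+ (q + 1).
Proof. by rewrite !exprD !expr1 frobN mulrNN. Qed.

Lemma tr_norm_shift (a x s : F) : a ^+ q = a ->
  tr (a * (x + s) ^+ (q + 1)) =
  tr (a * x ^+ (q + 1)) + tr ((a * s ^+ q) *+ 2 * x) + tr (a * s ^+ (q + 1)).
Proof.
move=> ha; have cross : tr (a * x ^+ q * s) = tr (a * s ^+ q * x).
  rewrite -[LHS](tr_frob m) !exprMn ha frobqK; congr (tr _); ring.
have -> : a * (x + s) ^+ (q + 1) = a * x ^+ (q + 1) + (a * s ^+ q) *+ 2 * x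
    + a * s ^+ (q + 1) + (a * x ^+ q * s - a * s ^+ q * x).
  by rewrite !exprD !expr1 frobD; ring.
by rewrite trD trB cross subrr addr0 !trD.
Qed.

Lemma codeword_affine a b h (mu r x : F) : a ^+ q = a ->
  codeword a b h (mu * x + r) =
  codeword (a * mu ^+ (q + 1)) ((b + (a * r ^+ q) *+ 2) * mu)
           (tr (a * r ^+ (q + 1) + b * r) + h) x.
Proof.
move=> ha; rewrite !ffunE trD tr_norm_shift // exprMn addrA -!trD.
by congr (tr _ + h); ring.
Qed.

Lemma codeword_shift a b h (x s : F) : a ^+ q = a -> tr (a * s ^+ (q + 1)) = 0 ->
  codeword a b h (x + s) = codeword a b h x + tr ((a * s ^+ q) *+ 2 * x + b * s).
Proof.
by move=> ha hs; rewrite !ffunE mulrDr !trD tr_norm_shift // hs addr0; ring.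
Qed.

Lemma codeword_shiftN a b h (x s : F) : a ^+ q = a -> tr (a * s ^+ (q + 1)) = 0 ->
  codeword a b h (x - s) = codeword a b h x - tr ((a * s ^+ q) *+ 2 * x + b * s).
Proof.
move=> ha hs; rewrite codeword_shift ?normN // frobN -trN.
by congr (_ + tr _); ring.
Qed.

Lemma wt_eq0 (c : vec F) : (wt c == 0%N) = (c == 0).
Proof.
rewrite /wt cards_eq0; apply/eqP/eqP => [supp0|->].
  apply/ffunP => t; rewrite ffunE; apply/eqP; apply: contraT => ct.
  have : t \in supp c by rewrite inE.
  by rewrite supp0 inE.
by apply/setP => t; rewrite !inE ffunE eqxx.
Qed.

Lemma wt_affine (c : vec F) (mu r : F) : mu != 0 ->
  wt [ffun x => c (mu * x + r)] = wt c.
Proof.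
move=> mu0; rewrite /wt -(@card_preimset _ (fun x => mu * x + r) (supp c)).
  by apply: eq_card => t; rewrite !inE ffunE.
by move=> x y /addIr /(mulfI mu0).
Qed.

Lemma min_wt_affine {c : vec F} {mu : F} (r : F) : mu != 0 ->
  min_wt_codeword m c -> min_wt_codeword m [ffun x => c (mu * x + r)].
Proof.
move=> mu0 /and3P [cC c_neq0 cmin]; apply/and3P; split.
- have [a [b [h [ha ->]]]] := codeCP cC.
  have -> : [ffun x => codeword a b h (mu * x + r)] = codeword (a * mu ^+ (q + 1))
      ((b + (a * r ^+ q) *+ 2) * mu) (tr (a * r ^+ (q + 1) + b * r) + h).
    by apply/ffunP => x; rewrite ffunE codeword_affine.
  by apply: codeword_in; rewrite exprMn ha norm_frob.
- by rewrite -wt_eq0 wt_affine // wt_eq0.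
- by rewrite wt_affine.
Qed.

Definition design_span (g : F -> 'F_3) : Prop := in_code_of_design m (finfun g).

Lemma design_span_ext {g1 g2 : F -> 'F_3} :
  design_span g1 -> g1 =1 g2 -> design_span g2.
Proof. by move=> [lam H] e; exists lam => t; rewrite -H !ffunE e. Qed.

Lemma design_span_add {g1 g2 : F -> 'F_3} :
  design_span g1 -> design_span g2 -> design_span (fun t => g1 t + g2 t).
Proof.
move=> [l1 H1] [l2 H2]; exists [ffun B => l1 B + l2 B] => t.
move: (H1 t) (H2 t); rewrite !ffunE => -> ->; rewrite -big_split.
by apply: eq_bigr => B _; rewrite !ffunE mulrDl.
Qed.

Lemma design_span_scale (k : 'F_3) {g : F -> 'F_3} :
  design_span g -> design_span (fun t => k * g t).
Proof.
move=> [l H]; exists [ffun B => k * l B] => t.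
move: (H t); rewrite !ffunE => ->; rewrite mulr_sumr.
by apply: eq_bigr => B _; rewrite !ffunE mulrA.
Qed.

Lemma design_span_sq {c : vec F} : min_wt_codeword m c -> design_span (fun t => c t ^+ 2).
Proof.
move=> mc; exists [ffun B => (B == supp c)%:R] => t.
rewrite (bigD1 (supp c)) /=; last by apply/existsP; exists c; rewrite mc eqxx.
rewrite big1 => [|B /andP [_ /negbTE nB]]; last by rewrite ffunE nB mul0r.
by rewrite !ffunE eqxx mul1r addr0 inE sqr_F3; case: (c t != 0).
Qed.

(* Squares of trace functionals lie in C_3(D_d), as soon as a minimum-weight codeword
   has an isotropic vector s <> 0 for its (nonzero) quadratic part: choosing mu and r so
   that the affine function added by the shift by s at mu t + r is tr(e t), we get
   tr(e t)^2 = - (c(x)^2 + c(x + s)^2 + c(x - s)^2) with x = mu t + r. *)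
Lemma design_span_tr_sq a b h (s e : F) :
  min_wt_codeword m (codeword a b h) -> a ^+ q = a -> a != 0 ->
  s != 0 -> tr (a * s ^+ (q + 1)) = 0 -> design_span (fun t => tr (e * t) ^+ 2).
Proof.
move=> mc ha a0 s0 hs; set c := codeword a b h in mc *.
have [->|e0] := eqVneq e 0.
  apply: (design_span_ext (design_span_scale 0 (design_span_sq mc))) => t /=.
  by rewrite !mul0r tr0 expr0n.
set u := (a * s ^+ q) *+ 2.
have u0 : u != 0 by rewrite /u -mulr_natr !mulf_neq0 ?expf_neq0 ?natr2_neq0.
have [r hr] := tr_onto (- tr (b * s)) u0.
set mu := e / u; have mu0 : mu != 0 by rewrite mulf_neq0 ?invr_eq0.
have sq_shift r' : design_span (fun t => c (mu * t + r') ^+ 2).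
  apply: (design_span_ext (design_span_sq (min_wt_affine r' mu0 mc))) => t.
  by rewrite ffunE.
have shift_term t : tr (u * (mu * t + r) + b * s) = tr (e * t).
  by rewrite mulrDr !trD hr addrNK mulrA /mu [u * _]mulrC divfK.
apply: (design_span_ext (design_span_scale (-1) (design_span_add
  (design_span_add (sq_shift r) (sq_shift (r + s))) (sq_shift (r - s))))) => t /=.
rewrite !addrA /c; set x := mu * t + r.
rewrite (codeword_shift _ _ _ x) // codeword_shiftN // shift_term.
by rewrite sqr_shifts_F3 mulN1r opprK.
Qed.

Lemma q_ge9 : (9 <= q)%N.
Proof. by rewrite (_ : 9 = 3 ^ 2)%N // leq_exp2l. Qed.

Lemma card_roots_le n (y : F) : (0 < n)%N -> (#|[set x : F | x ^+ n == y]| <= n)%N.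
Proof.
move=> n0; have := @max_poly_roots F ('X^n - y%:P) (enum [set x : F | x ^+ n == y]).
rewrite size_XnsubC // ltnS -cardE; apply.
- by rewrite -size_poly_eq0 size_XnsubC.
- by apply/allP => x; rewrite mem_enum inE => /eqP hx; rewrite /root !hornerE hx subrr.
- exact: enum_uniq.
Qed.

(* F_q^* has at most q - 1 elements, being made of roots of x^(q-1) = 1. *)
Lemma card_subF_units : (#|subF F m :\ 0%R| <= q.-1)%N.
Proof.
have q9 := q_ge9.
apply: leq_trans (card_roots_le q.-1 1 _); last lia.
apply: subset_leq_card; apply/subsetP => y; rewrite !inE => /andP [y0 /eqP yq].
by apply/eqP; apply: (mulIf y0); rewrite mul1r -exprSr prednK //; lia.
Qed.

(* The norm of F^* has at least q - 1 values, as its fibers have at most q + 1 points. *)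
Lemma card_norm_image : (q.-1 <= #|[set x ^+ (q + 1) | x in [set~ (0%R : F)]]|)%N.
Proof.
set I := [set _ | _ in _]; have q9 := q_ge9; have q1 : (0 < q + 1)%N by rewrite addn1.
rewrite -(leq_pmul2r q1) -(_ : (q * q).-1 = q.-1 * (q + 1))%N; last nia.
rewrite -cardF_sq -(cardsC1 (0 : F)) -sum1_card.
rewrite (partition_big (fun x => x ^+ (q + 1)) (mem I)) => [|x x0]; last exact: imset_f.
rewrite -sum_nat_const; apply: leq_sum => y _; rewrite sum1dep_card.
apply: leq_trans (card_roots_le (q + 1) y _); last by rewrite addn1.
by apply: subset_leq_card; apply/subsetP => x; rewrite !inE => /andP [_ ->].
Qed.

Lemma norm_onto : [set x ^+ (q + 1) | x in [set~ (0 : F)]] = subF F m :\ 0.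
Proof.
apply/eqP; rewrite eqEcard (leq_trans card_subF_units card_norm_image) andbT.
apply/subsetP => y /imsetP [x]; rewrite in_setC1 => x0 ->.
by rewrite !inE expf_neq0 // norm_frob eqxx.
Qed.

(* Every quadratic form t |-> tr(a t^(q+1)) with a in F_q has a nonzero isotropic
   vector: y |-> tr(a y) collides on F_q^* (of size q - 1 > 3), and the difference of
   two colliding points is a nonzero norm. *)
Lemma isotropic_exists (a : F) : exists s, s != 0 /\ tr (a * s ^+ (q + 1)) = 0.
Proof.
have big_units : (3 < #|subF F m :\ 0%R|)%N.
  by rewrite -norm_onto; apply: leq_trans card_norm_image; have := q_ge9; lia.
have [y1 [y2 [y1S y2S y12 tr12]]] := F3_collision (fun y => tr (a * y)) big_units.
have : y1 - y2 \in subF F m :\ 0.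
  move: y1S y2S; rewrite !inE subr_eq0 y12 => /andP [_ /eqP h1] /andP [_ /eqP h2].
  by rewrite frobD frobN h1 h2 eqxx.
rewrite -norm_onto => /imsetP [s]; rewrite in_setC1 => s0 ys.
by exists s; rewrite -ys mulrBr trB tr12 subrr.
Qed.

(* A set of nonzero elements closed under negation has even size, since t <> -t. *)
Lemma even_card_symmetric (A : {set F}) :
  0 \notin A -> {in A, forall t, - t \in A} -> ~~ odd #|A|.
Proof.
move: {2}#|A| (leqnn #|A|) => n; elim: n A => [|n IH] A le_n A0 symA.
  by move: le_n; rewrite leqn0 => /eqP ->.
have [->|[t tA]] := set_0Vmem A; first by rewrite cards0.
have t_neqN : t != - t.
  apply: contraTneq tA => ttN.
  have : 2%:R * t = 0 by rewrite mulr2n mulrDl mul1r {2}ttN subrr.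
  by move/eqP; rewrite mulf_eq0 (negbTE natr2_neq0) /= => /eqP ->.
have pairA : [set t; - t] \subset A.
  by apply/subsetP => x; rewrite !inE => /orP [] /eqP ->; last exact: symA.
have cardA : #|A| = (#|A :\: [set t; - t]| + 2)%N.
  have := subset_leq_card pairA; rewrite cards2 t_neqN => le2.
  by rewrite cardsD (setIidPr pairA) cards2 t_neqN subnK.
rewrite cardA addn2 /= negbK; apply: IH.
- by move: le_n; rewrite cardA; lia.
- by rewrite inE negb_and A0 orbT.
- move=> x; rewrite !inE => /andP [xP xA]; rewrite symA // andbT.
  by apply: contra xP; rewrite eqr_opp eqr_oppLR orbC.
Qed.

Definition zeros (c : vec F) : nat := #|[set t | c t == 0]|.

Lemma wt_zeros (c : vec F) : (wt c + zeros c)%N = #|F|.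
Proof.
rewrite /wt /zeros -(cardsC (supp c)); congr (_ + _)%N.
by apply: eq_card => t; rewrite !inE negbK.
Qed.

(* A nonzero linear functional t |-> tr(b t) takes each value on exactly |F|/3 points,
   its fibers being translates of its kernel. *)
Lemma card_tr_fiber {b : F} (v : 'F_3) : b != 0 ->
  (3 * #|[set t | tr (b * t)%R == v]|)%N = #|F|.
Proof.
move=> b0; have fiber_ker w : #|[set t | tr (b * t) == w]| = #|[set t | tr (b * t) == 0]|.
  have [r hr] := tr_onto w b0.
  rewrite -(@card_preimset _ (fun t => t + r) _ (addIr r)); apply: eq_card => t.
  by rewrite !inE mulrDr trD hr -subr_eq0 addrK.
rewrite -(card_fibers (fun t => tr (b * t))) (eq_bigr _ (fun w _ => fiber_ker w)).
by rewrite sum_nat_const card_Fp // fiber_ker.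
Qed.

Lemma affine_codeword_zeros {b : F} {h : 'F_3} :
  codeword 0 b h != 0 -> (3 * zeros (codeword 0%R b h) <= #|F|)%N.
Proof.
move=> nz; have value t : codeword 0 b h t = tr (b * t) + h by rewrite ffunE mul0r add0r.
have [b0|b0] := eqVneq b 0.
  suff -> : zeros (codeword 0 b h) = 0%N by [].
  apply/eqP; rewrite cards_eq0; apply/eqP/setP => t; rewrite !inE value b0 mul0r tr0 add0r.
  apply: contra_neqF nz => /eqP h0; apply/ffunP => x.
  by rewrite value b0 mul0r tr0 h0 addr0 ffunE.
rewrite -(card_tr_fiber (- h) b0) /zeros leq_mul2l; apply/orP; right.
by rewrite leq_eqVlt; apply/orP; left; apply/eqP/eq_card => t; rewrite !inE value addr_eq0.
Qed.

(* The quadratic form tr(t^(q+1)) is not identically zero: otherwise its polarization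
   tr(2 s^q x) would vanish for all x and s, contradicting tr_onto. *)
Lemma tr_norm_nonzero : exists t, tr (t ^+ (q + 1)) != 0.
Proof.
apply/existsP; apply: contraT => /existsPn /= zero.
have u0 : (1 : F) *+ 2 != 0 by rewrite -mulr_natr mul1r natr2_neq0.
have [x hx] := tr_onto 1 u0.
have := tr_norm_shift 1 x 1 (expr1n _ _).
rewrite expr1n !mul1r !(eqP (negbNE (zero _))) hx add0r addr0.
by move/eqP; rewrite eq_sym oner_eq0.
Qed.

(* Some level set of tr(t^(q+1)) has more than |F|/3 points: otherwise all three level
   sets would have exactly |F|/3 points, but the zero level set has odd size (0 and
   pairs {t, -t}) while the level set of 1 has even size. *)
Lemma big_norm_level : exists v, (#|F| < 3 * #|[set t | tr (t ^+ (q + 1))%R == v]|)%N.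
Proof.
pose level (v : 'F_3) := #|[set t | tr (t ^+ (q + 1)) == v]|.
have tr_norm0 : tr (0 ^+ (q + 1)) = 0 by rewrite expr0n addn1 tr0.
have odd_level0 : odd (level 0).
  rewrite /level (cardsD1 0) inE tr_norm0 eqxx /= add0n.
  apply: even_card_symmetric; first by rewrite !inE eqxx.
  by move=> t; rewrite !inE normN oppr_eq0.
have even_level1 : ~~ odd (level 1).
  apply: even_card_symmetric; first by rewrite inE tr_norm0 eq_sym oner_eq0.
  by move=> t; rewrite !inE normN.
apply/existsP; apply: contraT => /existsPn /= small.
have le_avg v : (#|'F_3| * level v <= #|F|)%N by rewrite card_Fp // leqNgt small.
have avg := below_average_eq level #|F| (card_fibers (fun t => tr (t ^+ (q + 1)))) le_avg.
have same_level : level 0 = level 1.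
  have F3_pos : (0 < #|'F_3|)%N by rewrite card_Fp.
  by apply/eqP; rewrite -(eqn_pmul2l F3_pos) !avg.
by move: odd_level0; rewrite same_level (negbTE even_level1).
Qed.

(* Minimum-weight codewords exist, the constant codeword 1 being a nonzero codeword. *)
Lemma min_wt_exists : exists c : vec F, min_wt_codeword m c.
Proof.
pose nonzero_word (c : vec F) := (c \in codeC F m) && (c != 0).
have c1 : nonzero_word (codeword 0 0 1).
  rewrite /nonzero_word codeword_in ?expr0n ?expn_eq0 //=.
  apply/eqP => /ffunP /(_ 0); rewrite !ffunE !mul0r addr0 tr0 add0r.
  by move/eqP; rewrite oner_eq0.
have [c /andP [cC c0] cmin] := arg_minnP (@wt F) c1.
exists c; rewrite /min_wt_codeword cC c0; apply/forall_inP => c' c'C.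
by apply/implyP => c'0; apply: cmin; rewrite /nonzero_word c'C.
Qed.

(* Some minimum-weight codeword has a nonzero quadratic part: affine codewords have at
   least 2|F|/3 nonzeros, while tr(t^(q+1)) - v has fewer for the v of big_norm_level. *)
Lemma min_wt_quadratic :
  exists a b h, [/\ min_wt_codeword m (codeword a b h), a ^+ q = a & a != 0].
Proof.
have [c mc] := min_wt_exists; case/and3P: (mc) => cC c0 cmin.
have [a [b [h [ha ec]]]] := codeCP cC; subst c.
exists a, b, h; split => //; apply: contraT => /negPn /eqP a0; subst a.
have [v big_v] := big_norm_level.
pose c' := codeword 1 0 (- v).
have zeros_c' : zeros c' = #|[set t | tr (t ^+ (q + 1)) == v]|.
  by apply: eq_card => t; rewrite !inE ffunE mul1r mul0r addr0 subr_eq0.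
have c'0 : c' != 0.
  have [t tr_t] := tr_norm_nonzero; apply/eqP => /ffunP c'_zero.
  move: (c'_zero 0) (c'_zero t); rewrite !ffunE !mul1r !mul0r !addr0.
  rewrite expr0n addn_eq0 andbF tr0 add0r => /eqP; rewrite oppr_eq0 => /eqP -> /eqP.
  by rewrite subr0 (negbTE tr_t).
have few_zeros : (3 * zeros (codeword 0%R b h) <= #|F|)%N := affine_codeword_zeros c0.
have wt_le : (wt (codeword 0%R b h) <= wt c')%N.
  exact: implyP (forall_inP cmin c' (codeword_in 1 0 (- v) (expr1n _ _))) c'0.
have := wt_zeros (codeword 0 b h); have := wt_zeros c'; lia.
Qed.

End TraceCode.

Theorem lemma3p7 (F : finFieldType) (m : nat) (hm : (2 <= m)%N)
  (hF : #|F| = (3 ^ (2 * m))%N) (b b' : F) :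
  in_code_of_design m [ffun t : F => trF3 m (b * t) * trF3 m (b' * t)].
Proof.
have [a [b0 [h [min_wt ha a0]]]] := min_wt_quadratic F m hF hm.
have [s [s0 isotropic]] := isotropic_exists F m hF hm a.
have tr_sq e := design_span_tr_sq F m hF hm a b0 h s e min_wt ha a0 s0 isotropic.
apply: (design_span_ext F m (design_span_add F m (tr_sq (b + b'))
  (design_span_scale F m (-1) (tr_sq (b - b'))))) => t /=.
by rewrite mulrDl mulrBl (trD F m hF) (trB F m hF) -polarization_F3.
Qed.
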